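(* Consider the pulse-coupled oscillator network described in the context with effective coupling matrix $\varepsilon_{ij}=\varepsilon_j$ for $i\neq j$ and $\varepsilon_{ii}$ on the diagonal, where $\varepsilon_j>0$, $0\le \varepsilon_{jj}\le\varepsilon_j$ and $\sum_j\varepsilon_{ij}<1$, with a rise function $U$ and a neuronal partial reset function $R$. For $\Sigma=(\sigma_1,\dots,\sigma_N)\in\mathbb{R}^N$ and $\phi$ define $\mathbf{L}=(\mathbf{L}_1,\dots,\mathbf{L}_N)$ by $$\mathbf{L}_i(\Sigma,\phi):=\Big[\bigodot_{s=i+1}^{N+i-1}\big(S_{\sigma_s}\circ H_{\varepsilon_s}\big)\Big]\circ S_{\sigma_i}\circ J_{\varepsilon_{ii}}(\phi),\qquad i\in\{1,\dots,N\},$$ with indices taken modulo $N$. Then an asynchronous periodic state (in which the units fire one at a time in the cyclic order $1,2,\dots,N$) exists if and only if the equation $\mathbf{L}(\Sigma,1)=(1,1,\dots,1)$ has a solution $\Sigma^*\in\mathbb{R}^N$ with $\sigma^*_r>0$ for all $r\in\{1,\dots,N\}$.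
   Context: Model: $N$ units with phases $\phi_i$. A rise function is a smooth $U:[0,\infty)\to[0,\infty)$ with $U'>0$, $U(0)=0$, $U(1)=1$; $U^{-1}$ is its inverse. A partial reset function is a monotonically increasing $R:\mathbb{R}\to\mathbb{R}$ with $R(0)=0$; it is neuronal if $0\le R(\zeta)\le\zeta$ for all $\zeta\ge0$. For $\varepsilon\ge0$, $\sigma\in\mathbb{R}$: $H_\varepsilon(\phi)=U^{-1}(U(\phi)+\varepsilon)$, $J_\varepsilon(\phi)=U^{-1}(R(U(\phi)+\varepsilon-1))$, $S_\sigma(\phi)=\phi+\sigma$. Composition notation: $\bigodot_{s=p}^{q}(S_{\sigma_s}\circ H_{\varepsilon_s}):=S_{\sigma_q}\circ H_{\varepsilon_q}\circ\cdots\circ S_{\sigma_p}\circ H_{\varepsilon_p}$ (the factor with index $p$ is applied first). Dynamics: $\varepsilon_{ij}\ge0$ is the strength of the pulse sent from unit $j$ to unit $i$. Between events every phase increases at unit rate. When at time $t$ the set $\Theta^{(0)}=\{j:\phi_j(t^-)=1\}$ is nonempty, an avalanche occurs: with potentials $u_i^{(0)}=U(\phi_i(t^-))$, set $u_i^{(k+1)}=u_i^{(k)}+\sum_{j\in\Theta^{(k)}}\varepsilon_{ij}$ and $\Theta^{(k+1)}=\{i: u_i^{(k)}<1\le u_i^{(k+1)}\}$ until $\Theta^{(k+1)}=\emptyset$; let $\Theta=\bigcup_k\Theta^{(k)}$. Then $\phi_i(t^+)=H_{\sum_{j\in\Theta}\varepsilon_{ij}}(\phi_i(t^-))$ for $i\notin\Theta$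 and $\phi_i(t^+)=J_{\sum_{j\in\Theta}\varepsilon_{ij}}(\phi_i(t^-))$ for $i\in\Theta$ (units in $\Theta$ fire a pulse and are partially reset). The return map sends the network state just before a fixed reference unit fires to the state just before that unit fires next. An asynchronous periodic state is a state invariant under the return map in which every avalanche has size $1$ (each unit fires alone and never receives supra-threshold input). *)

From Stdlib Require Import Reals Lra Lia Arith.
Open Scope R_scope.

(* Units are indexed 0 .. N-1 (paper: 1 .. N); vectors are functions nat -> R,
   only indices < N are meaningful. *)

(* Rise function U : [0,oo) -> [0,oo), smooth (C^infinity), U' > 0, U 0 = 0, U 1 = 1.
   U is given as a total function R -> R; only its values on [0,oo) matter.
   D n is the n-th derivative. *)
Definition rise_function (U : R -> R) : Prop :=
  exists D : nat -> R -> R,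
    D 0%nat = U /\
    (forall (n : nat) (x : R), 0 <= x -> derivable_pt_lim (D n) x (D (S n) x)) /\
    (forall x, 0 <= x -> 0 < D 1%nat x) /\
    (forall x, 0 <= x -> 0 <= U x) /\
    U 0 = 0 /\ U 1 = 1.

(* Neuronal partial reset function (monotonically increasing = non-decreasing). *)
Definition neuronal_reset (Rs : R -> R) : Prop :=
  (forall a b, a <= b -> Rs a <= Rs b) /\
  Rs 0 = 0 /\
  (forall z, 0 <= z -> 0 <= Rs z /\ Rs z <= z).

(* U^{-1} is the inverse of U on its image, hence partial.  We therefore use the
   graphs of the (partial) maps H_eps and J_eps:
   H_rel U eps phi psi  <->  H_eps(phi) is defined and equals psi
   (psi = U^{-1}(U(phi)+eps), i.e. psi >= 0 and U psi = U phi + eps;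
    this determines psi uniquely since U is strictly increasing on [0,oo)). *)
Definition H_rel (U : R -> R) (eps phi psi : R) : Prop :=
  0 <= phi /\ 0 <= psi /\ U psi = U phi + eps.

Definition J_rel (U Rs : R -> R) (eps phi psi : R) : Prop :=
  0 <= phi /\ 0 <= psi /\ U psi = Rs (U phi + eps - 1).

Definition epsij (eps epsd : nat -> R) (i j : nat) : R :=
  if Nat.eqb i j then epsd j else eps j.

(* Graph of  (S_{sigma_{start+m-1}} o H_{eps_{start+m-1}}) o ... o (S_{sigma_start} o H_{eps_start}),
   indices taken modulo N. *)
Fixpoint Hchain (U : R -> R) (N : nat) (eps sig : nat -> R)
    (m start : nat) (phi psi : R) : Prop :=
  match m with
  | O => psi = phi
  | S m' => exists chi, H_rel U (eps (start mod N)) phi chi /\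
             Hchain U N eps sig m' (S start) (chi + sig (start mod N)) psi
  end.

(* Graph of L_i(Sigma, .) :
   L_i = [odot_{s=i+1}^{N+i-1} (S_{sigma_s} o H_{eps_s})] o S_{sigma_i} o J_{eps_ii}. *)
Definition L_rel (U Rs : R -> R) (N : nat) (eps epsd sig : nat -> R)
    (i : nat) (phi psi : R) : Prop :=
  exists a, J_rel U Rs (epsd i) phi a /\
            Hchain U N eps sig (N - 1) (S i) (a + sig i) psi.

(* One event in which unit j fires alone (avalanche of size 1):
   Theta^(0) = {j}, Theta^(1) = empty; x is the state just before, y just after. *)
Definition single_firing_event (U Rs : R -> R) (N : nat) (eps epsd : nat -> R)
    (j : nat) (x y : nat -> R) : Prop :=
  x j = 1 /\ (forall i, (i < N)%nat -> i <> j -> x i <> 1) /\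
  (forall i, (i < N)%nat ->
     ~ (U (x i) < 1 /\ 1 <= U (x i) + epsij eps epsd i j)) /\
  J_rel U Rs (epsd j) (x j) (y j) /\
  (forall i, (i < N)%nat -> i <> j -> H_rel U (eps j) (x i) (y i)).

(* Free evolution from the post-event state y until the next event (first time a
   phase reaches 1); z is the state just before that event. *)
Definition free_evolution (N : nat) (y z : nat -> R) : Prop :=
  exists delta, 0 < delta /\
    (forall i, (i < N)%nat -> z i = y i + delta) /\
    (forall i, (i < N)%nat -> z i <= 1) /\
    (exists i, (i < N)%nat /\ z i = 1).

Definition valid_state (N : nat) (x : nat -> R) : Prop :=
  forall i, (i < N)%nat -> 0 <= x i /\ x i <= 1.

(* x is an asynchronous periodic state (reference unit 0) in which units fire one
   at a time in the cyclic order 0,1,...,N-1: starting just before unit 0 fires,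
   the units 0,1,...,N-1 fire alone in turn (avalanches of size 1) and the state
   just before unit 0 fires next equals x (invariance under the return map). *)
Definition async_periodic_state (U Rs : R -> R) (N : nat) (eps epsd : nat -> R)
    (x : nat -> R) : Prop :=
  valid_state N x /\
  exists (pre post : nat -> nat -> R),
    (forall i, (i < N)%nat -> pre 0%nat i = x i) /\
    (forall k, (k < N)%nat ->
       single_firing_event U Rs N eps epsd k (pre k) (post k) /\
       free_evolution N (post k) (pre (S k))) /\
    (forall i, (i < N)%nat -> pre N i = x i).

From Stdlib Require Import Reals Lra Lia Arith IndefiniteDescription.
Open Scope R_scope.

(* Both sides of the equivalence describe the same object: for every unit i,
   the trajectory of its phase during one period, read off just before each
   firing of the other units.  After unit i fires its phase is J_{eps_ii}(1);
   every later firing of a unit j <> i applies H_{eps_j}, and the free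
   evolution that follows applies S_{sigma_j}, where sigma_j is the (common)
   length of that free evolution.  The trajectory returns to 1 exactly when
   unit i fires again, which is the equation L_i(Sigma, 1) = 1.
   We first characterise the graph Hchain of a composition of the maps
   S o H by the sequence of intermediate phases (Hchain_iff_seq).  The
   forward direction then reads the trajectories off a periodic state with
   sigma_k the length of the k-th free evolution.  For the converse we pick
   trajectories from the solutions of L(Sigma, 1) = 1, interleave them into
   the states just before each firing, and check that every firing is a
   size-1 avalanche: since every sigma_j > 0 and H_eps increases phases, each
   trajectory stays strictly below 1 until its end, and U(phi) + eps_j < 1
   whenever a unit j <> i fires. *)

Lemma rise_strict U : rise_function U ->
  forall a b, 0 <= a -> a < b -> U a < U b.
Proof.
  intros [D [HD0 [Hderiv [Hpos _]]]] a b Ha Hab.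
  destruct (MVT_cor2 U (D 1%nat) a b Hab) as [c [Hmvt Hc]].
  - intros c Hc. rewrite <- HD0. apply Hderiv. lra.
  - assert (0 < D 1%nat c) by (apply Hpos; lra). nra.
Qed.

Lemma H_rel_increases U e phi psi :
  rise_function U -> 0 < e -> H_rel U e phi psi -> phi < psi.
Proof.
  intros hU he [Hphi [Hpsi HU]].
  destruct (Rlt_or_le phi psi) as [Hlt | Hge]; [exact Hlt |].
  destruct (Rle_lt_or_eq_dec psi phi Hge) as [Hlt | Heq].
  - pose proof (rise_strict U hU psi phi Hpsi Hlt). lra.
  - subst. lra.
Qed.

Lemma mod_second_period N a : (N <= a < N + N)%nat -> (a mod N = a - N)%nat.
Proof.
  intros Ha. replace a with ((a - N) + 1 * N)%nat at 1 by lia.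
  rewrite Nat.Div0.mod_add. apply Nat.mod_small. lia.
Qed.

(* Between two firings of unit i the other N - 1 units fire, never i itself. *)
Lemma shift_mod_neq N i t :
  (i < N)%nat -> (t < N - 1)%nat -> ((S i + t) mod N)%nat <> i.
Proof.
  intros Hi Ht. destruct (Nat.lt_ge_cases (S i + t) N).
  - rewrite Nat.mod_small; lia.
  - rewrite mod_second_period; lia.
Qed.

Lemma increasing_below_last (g : nat -> R) n :
  (forall t, (t < n)%nat -> g t < g (S t)) ->
  forall t, (t < n)%nat -> g t < g n.
Proof.
  induction n as [| n IH]; intros Hinc t Ht; [lia |].
  destruct (Nat.eq_dec t n) as [-> | Hne].
  - apply Hinc. lia.
  - apply Rlt_trans with (g n).
    + apply IH; [intros s Hs; apply Hinc; lia | lia].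
    + apply Hinc. lia.
Qed.

Definition pulse_chain (U : R -> R) (N : nat) (eps sig : nat -> R)
    (start : nat) (f : nat -> R) (m : nat) : Prop :=
  forall t, (t < m)%nat ->
    H_rel U (eps ((start + t) mod N)%nat) (f t) (f (S t) - sig ((start + t) mod N)%nat).

Lemma Hchain_iff_seq U N eps sig m : forall start phi psi,
  Hchain U N eps sig m start phi psi <->
  exists f : nat -> R, f 0%nat = phi /\ f m = psi /\ pulse_chain U N eps sig start f m.
Proof.
  induction m as [| m IH]; intros start phi psi; simpl.
  - split.
    + intros ->. exists (fun _ => phi). split; [reflexivity | split; [reflexivity |]].
      intros t Ht. lia.
    + intros [f [<- [<- _]]]. reflexivity.
  - split.
    + intros [chi [Hh Hc]]. apply IH in Hc as [f [Hf0 [Hfm Hf]]].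
      exists (fun t => match t with O => phi | S t' => f t' end).
      split; [reflexivity | split; [exact Hfm |]].
      intros [| t] Ht; simpl.
      * rewrite Hf0, Nat.add_0_r.
        replace (chi + sig (start mod N)%nat - sig (start mod N)%nat) with chi by ring.
        exact Hh.
      * replace (start + S t)%nat with (S start + t)%nat by lia. apply Hf. lia.
    + intros [f [Hf0 [Hfm Hf]]].
      exists (f 1%nat - sig (start mod N)%nat). split.
      * rewrite <- Hf0. pose proof (Hf 0%nat ltac:(lia)) as H0.
        rewrite Nat.add_0_r in H0. exact H0.
      * apply IH. exists (fun t => f (S t)).
        split; [ring | split; [exact Hfm |]].
        intros t Ht. replace (S start + t)%nat with (start + S t)%nat by lia.
        apply Hf. lia.
Qed.

Section PeriodicStateToSolution.

Variables (N : nat) (U Rs : R -> R) (eps epsd : nat -> R) (x : nat -> R).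
Variables (pre post : nat -> nat -> R).
Hypothesis hN : (1 <= N)%nat.
Hypothesis hstart : forall i, (i < N)%nat -> pre 0%nat i = x i.
Hypothesis hevents : forall k, (k < N)%nat ->
  single_firing_event U Rs N eps epsd k (pre k) (post k) /\
  free_evolution N (post k) (pre (S k)).
Hypothesis hperiod : forall i, (i < N)%nat -> pre N i = x i.

Definition interval (k : nat) : R := pre (S k) 0%nat - post k 0%nat.

Lemma pre_after_free k i :
  (k < N)%nat -> (i < N)%nat -> pre (S k) i = post k i + interval k.
Proof.
  intros Hk Hi. destruct (hevents k Hk) as [_ [d [_ [Hd _]]]].
  unfold interval. rewrite (Hd i Hi), (Hd 0%nat ltac:(lia)). ring.
Qed.

Lemma interval_pos k : (k < N)%nat -> 0 < interval k.
Proof.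
  intros Hk. destruct (hevents k Hk) as [_ [d [Hdpos [Hd _]]]].
  unfold interval. rewrite (Hd 0%nat ltac:(lia)). lra.
Qed.

Lemma pre_mod j i : (j <= N)%nat -> (i < N)%nat -> pre j i = pre (j mod N) i.
Proof.
  intros Hj Hi. destruct (Nat.eq_dec j N) as [-> | Hne].
  - rewrite Nat.Div0.mod_same, hperiod, hstart; auto.
  - rewrite Nat.mod_small; [reflexivity | lia].
Qed.

(* The phases of unit i just before the next N - 1 firings solve L_i(Sigma, 1) = 1. *)
Lemma L_rel_of_periodic_state i : (i < N)%nat -> L_rel U Rs N eps epsd interval i 1 1.
Proof.
  intros Hi. destruct (hevents i Hi) as [[Hfire [_ [_ [HJ _]]]] _].
  exists (post i i). split; [rewrite <- Hfire; exact HJ |].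
  apply Hchain_iff_seq. exists (fun t => pre ((S i + t) mod N)%nat i). split; [| split].
  - rewrite Nat.add_0_r, <- pre_mod, pre_after_free by lia. reflexivity.
  - rewrite mod_second_period by lia.
    replace (S i + (N - 1) - N)%nat with i by lia. exact Hfire.
  - intros t Ht. set (j := ((S i + t) mod N)%nat).
    assert (Hj : (j < N)%nat) by (apply Nat.mod_upper_bound; lia).
    assert (Hnext : pre ((S i + S t) mod N)%nat i = post j i + interval j).
    { rewrite <- pre_after_free by lia. rewrite (pre_mod (S j)) by lia. f_equal.
      unfold j. replace (S i + S t)%nat with (S i + t + 1)%nat by lia.
      replace (S ((S i + t) mod N)) with ((S i + t) mod N + 1)%nat by lia.
      rewrite Nat.Div0.add_mod_idemp_l. reflexivity. }
    rewrite Hnext. replace (post j i + interval j - interval j) with (post j i) by ring.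
    destruct (hevents j Hj) as [[_ [_ [_ [_ HH]]]] _].
    apply HH; [exact Hi |]. intros Heq. apply (shift_mod_neq N i t); auto.
Qed.

End PeriodicStateToSolution.

Section SolutionToPeriodicState.

Variables (N : nat) (U Rs : R -> R) (eps epsd sig : nat -> R).
Hypothesis hN : (1 <= N)%nat.
Hypothesis hU : rise_function U.
Hypothesis heps : forall j, (j < N)%nat -> 0 < eps j.
Hypothesis hsig : forall r, (r < N)%nat -> 0 < sig r.

(* For each unit i: its phase a i after firing, and its phases f i t just
   before the t-th subsequent firing of another unit, as given by a solution
   of L_i(Sigma, 1) = 1. *)
Variables (a : nat -> R) (f : nat -> nat -> R).
Hypothesis htraj : forall i, (i < N)%nat ->
  J_rel U Rs (epsd i) 1 (a i) /\ f i 0%nat = a i + sig i /\ f i (N - 1)%nat = 1 /\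
  pulse_chain U N eps sig (S i) (f i) (N - 1).

Lemma traj_step i t : (i < N)%nat -> (t < N - 1)%nat ->
  let j := ((S i + t) mod N)%nat in
  (j < N)%nat /\ H_rel U (eps j) (f i t) (f i (S t) - sig j).
Proof.
  intros Hi Ht j. split; [apply Nat.mod_upper_bound; lia |].
  destruct (htraj i Hi) as [_ [_ [_ Hchain]]]. exact (Hchain t Ht).
Qed.

(* Pulses and free evolutions both increase the phase. *)
Lemma traj_increasing i t : (i < N)%nat -> (t < N - 1)%nat -> f i t < f i (S t).
Proof.
  intros Hi Ht. destruct (traj_step i t Hi Ht) as [Hj HH].
  pose proof (H_rel_increases U _ _ _ hU (heps _ Hj) HH).
  pose proof (hsig _ Hj). lra.
Qed.

Lemma traj_below_one i t : (i < N)%nat -> (t < N - 1)%nat -> f i t < 1.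
Proof.
  intros Hi Ht. destruct (htraj i Hi) as [_ [_ [Hend _]]]. rewrite <- Hend.
  apply increasing_below_last; [| exact Ht].
  intros s Hs. apply traj_increasing; assumption.
Qed.

Lemma traj_range i t : (i < N)%nat -> (t <= N - 1)%nat -> 0 <= f i t <= 1.
Proof.
  intros Hi Ht. destruct (Nat.eq_dec t (N - 1)) as [-> | Hne].
  - destruct (htraj i Hi) as [_ [_ [-> _]]]. lra.
  - destruct (traj_step i t Hi ltac:(lia)) as [_ [H0 _]].
    pose proof (traj_below_one i t Hi ltac:(lia)). lra.
Qed.

(* Phase of unit i just before unit k fires (k = 0 .. N): unit i last fired
   in the current round if i < k, in the previous round otherwise. *)
Definition pre_state (k i : nat) : R :=
  if (i <? k)%nat then f i (k - i - 1) else f i (k + N - i - 1).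

Definition post_state (k i : nat) : R :=
  if (i =? k)%nat then a i else pre_state (S k) i - sig k.

Lemma pre_state_other k i : (k < N)%nat -> (i < N)%nat -> i <> k ->
  exists t, (t < N - 1)%nat /\ ((S i + t) mod N)%nat = k /\
    pre_state k i = f i t /\ pre_state (S k) i = f i (S t).
Proof.
  intros Hk Hi Hik. unfold pre_state. destruct (Nat.ltb_spec i k).
  - exists (k - i - 1)%nat. destruct (Nat.ltb_spec i (S k)); [| lia].
    repeat split; [lia | rewrite Nat.mod_small; lia | f_equal; lia].
  - exists (k + N - i - 1)%nat. destruct (Nat.ltb_spec i (S k)); [lia |].
    repeat split; [lia | rewrite mod_second_period; lia | f_equal; lia].
Qed.

Lemma pre_state_fire k : (k < N)%nat -> pre_state k k = 1.
Proof.
  intros Hk. unfold pre_state. rewrite Nat.ltb_irrefl.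
  destruct (htraj k Hk) as [_ [_ [Hend _]]]. rewrite <- Hend. f_equal. lia.
Qed.

Lemma pre_state_after_fire k : (k < N)%nat -> pre_state (S k) k = a k + sig k.
Proof.
  intros Hk. unfold pre_state. destruct (Nat.ltb_spec k (S k)); [| lia].
  replace (S k - k - 1)%nat with 0%nat by lia. apply (htraj k Hk).
Qed.

Lemma pre_state_range k i : (k <= N)%nat -> (i < N)%nat -> 0 <= pre_state k i <= 1.
Proof.
  intros Hk Hi. unfold pre_state.
  destruct (Nat.ltb_spec i k); apply traj_range; auto; lia.
Qed.

Lemma pre_state_periodic i : (i < N)%nat -> pre_state N i = pre_state 0%nat i.
Proof.
  intros Hi. unfold pre_state.
  destruct (Nat.ltb_spec i N), (Nat.ltb_spec i 0); [lia | f_equal; lia | lia | lia].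
Qed.

Lemma no_supra_threshold k i : (k < N)%nat -> (i < N)%nat ->
  ~ (U (pre_state k i) < 1 /\ 1 <= U (pre_state k i) + epsij eps epsd i k).
Proof.
  intros Hk Hi [Hbelow Hover].
  assert (HU1 : U 1 = 1) by (destruct hU as [D [_ [_ [_ [_ [_ HU1]]]]]]; exact HU1).
  destruct (Nat.eq_dec i k) as [-> | Hik].
  - rewrite pre_state_fire, HU1 in Hbelow; [lra | exact Hk].
  - unfold epsij in Hover. rewrite (proj2 (Nat.eqb_neq i k) Hik) in Hover.
    destruct (pre_state_other k i Hk Hi Hik) as [t [Ht [Hj [Hpre Hnext]]]].
    destruct (traj_step i t Hi Ht) as [_ [_ [Hnn HH]]]. rewrite Hj in HH, Hnn.
    assert (Hlt : f i (S t) - sig k < 1).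
    { pose proof (traj_range i (S t) Hi ltac:(lia)). pose proof (hsig k Hk). lra. }
    pose proof (rise_strict U hU _ _ Hnn Hlt). rewrite Hpre in Hover. lra.
Qed.

Lemma firing_event_of_traj k : (k < N)%nat ->
  single_firing_event U Rs N eps epsd k (pre_state k) (post_state k).
Proof.
  intros Hk. split; [| split; [| split; [| split]]].
  - apply pre_state_fire. exact Hk.
  - intros i Hi Hik. destruct (pre_state_other k i Hk Hi Hik) as [t [Ht [_ [-> _]]]].
    pose proof (traj_below_one i t Hi Ht). lra.
  - intros i Hi. apply no_supra_threshold; assumption.
  - unfold post_state. rewrite Nat.eqb_refl, pre_state_fire by exact Hk. apply (htraj k Hk).
  - intros i Hi Hik. unfold post_state. rewrite (proj2 (Nat.eqb_neq i k) Hik).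
    destruct (pre_state_other k i Hk Hi Hik) as [t [Ht [Hj [-> ->]]]].
    destruct (traj_step i t Hi Ht) as [_ HH]. rewrite Hj in HH. exact HH.
Qed.

Lemma free_evolution_of_traj k : (k < N)%nat ->
  free_evolution N (post_state k) (pre_state (S k)).
Proof.
  intros Hk. exists (sig k). split; [| split; [| split]].
  - apply hsig. exact Hk.
  - intros i Hi. unfold post_state. destruct (Nat.eqb_spec i k) as [-> | _].
    + apply pre_state_after_fire. exact Hk.
    + ring.
  - intros i Hi. apply pre_state_range; [lia | exact Hi].
  - destruct (Nat.eq_dec (S k) N) as [HkN | HkN].
    + exists 0%nat. split; [lia |].
      rewrite HkN, pre_state_periodic by lia. apply pre_state_fire. lia.
    + exists (S k). split; [lia |]. apply pre_state_fire. lia.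
Qed.

Lemma periodic_state_of_traj : async_periodic_state U Rs N eps epsd (pre_state 0%nat).
Proof.
  split; [intros i Hi; apply pre_state_range; lia |].
  exists pre_state, post_state. split; [reflexivity | split].
  - intros k Hk. split; [apply firing_event_of_traj | apply free_evolution_of_traj]; exact Hk.
  - exact pre_state_periodic.
Qed.

End SolutionToPeriodicState.

Lemma trajectories_of_solution N U Rs eps epsd sig :
  (forall i, (i < N)%nat -> L_rel U Rs N eps epsd sig i 1 1) ->
  exists (a : nat -> R) (f : nat -> nat -> R), forall i, (i < N)%nat ->
    J_rel U Rs (epsd i) 1 (a i) /\ f i 0%nat = a i + sig i /\ f i (N - 1)%nat = 1 /\
    pulse_chain U N eps sig (S i) (f i) (N - 1).
Proof.
  intros HL.
  assert (Hex : forall i, exists p : R * (nat -> R), (i < N)%nat ->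
    J_rel U Rs (epsd i) 1 (fst p) /\ snd p 0%nat = fst p + sig i /\
    snd p (N - 1)%nat = 1 /\ pulse_chain U N eps sig (S i) (snd p) (N - 1)).
  { intros i. destruct (lt_dec i N) as [Hi | Hi].
    - destruct (HL i Hi) as [a [HJ Hc]]. apply Hchain_iff_seq in Hc as [f [Hf0 [Hfm Hf]]].
      exists (a, f). intros _. simpl. auto.
    - exists (0, fun _ => 0). intros Hi'. contradiction. }
  destruct (functional_choice _ Hex) as [p Hp].
  exists (fun i => fst (p i)), (fun i => snd (p i)). exact Hp.
Qed.

Theorem mainTheorem1 (N : nat) (U Rs : R -> R) (eps epsd : nat -> R)
  (hN : (1 <= N)%nat)
  (hU : rise_function U)
  (hR : neuronal_reset Rs)
  (heps : forall j, (j < N)%nat -> 0 < eps j)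
  (hepsd : forall j, (j < N)%nat -> 0 <= epsd j /\ epsd j <= eps j)
  (hsum : forall i, (i < N)%nat -> sum_f_R0 (fun j => epsij eps epsd i j) (N - 1) < 1) :
  (exists x : nat -> R, async_periodic_state U Rs N eps epsd x) <->
  (exists sig : nat -> R,
     (forall r, (r < N)%nat -> 0 < sig r) /\
     (forall i, (i < N)%nat -> L_rel U Rs N eps epsd sig i 1 1)).
Proof.
  split.
  - intros [x [_ [pre [post [Hstart [Hevents Hperiod]]]]]].
    exists (interval pre post). split.
    + intros r Hr. exact (interval_pos N U Rs eps epsd pre post hN Hevents r Hr).
    + intros i Hi.
      exact (L_rel_of_periodic_state N U Rs eps epsd x pre post hN Hstart Hevents Hperiod i Hi).
  - intros [sig [Hsig HL]].
    destruct (trajectories_of_solution N U Rs eps epsd sig HL) as [a [f Htraj]].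
    exists (pre_state N f 0%nat).
    exact (periodic_state_of_traj N U Rs eps epsd sig hN hU heps Hsig a f Htraj).
Qed.
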